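(* Let $|\text{-}|:\mathcal E\to\mathcal B$ be a concrete category over $\mathcal B$ with $\mathcal E$ non-empty, such that the $\mathcal Q_{\mathcal B}$-category $\overline{\mathcal E}$ is tensored. Then $|\text{-}|$ has a fully faithful left adjoint $L:\mathcal B\to\mathcal E$ which is a right inverse of $|\text{-}|$ (i.e. $|LT|=T$ and the unit is the identity).
   Context: $\mathcal B$ is a category with small hom-sets; a concrete category over $\mathcal B$ is a category with a faithful functor $|\text{-}|:\mathcal E\to\mathcal B$; a map $f:|X|\to|Y|$ is an $\mathcal E$-morphism if it is $|f'|$ for some $f':X\to Y$. For subsets $\mathbf f\subseteq\mathcal B(S,T)$, $\mathbf h\subseteq\mathcal B(S,U)$, put $\mathbf h\swarrow\mathbf f=\{g\in\mathcal B(T,U)\mid\forall f\in\mathbf f: g\circ f\in\mathbf h\}$. $\overline{\mathcal E}(X,Y)$ denotes the set of $\mathcal E$-morphisms $|X|\to|Y|$. $\overline{\mathcal E}$ is tensored if for all $X\in\mathrm{ob}\,\mathcal E$, $T\in\mathrm{ob}\,\mathcal B$ and all subsets $\mathbf u\subseteq\mathcal B(|X|,T)$ (including $\mathbf u=\varnothing$) there is $Y\in\mathrm{ob}\,\mathcal E$ with $|Y|=T$ and $\overline{\mathcal E}(Y,Z)=\overline{\mathcal E}(X,Z)\swarrow\mathbf u$ for all $Z\in\mathrm{ob}\,\mathcal E$. *)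

Set Implicit Arguments.
Set Universe Polymorphism.

(** A category; hom-types [hom a b : Type] play the role of the (small)
    hom-sets; subsets of hom-sets are predicates [hom a b -> Prop]. *)
Record Category := {
  ob :> Type;
  hom : ob -> ob -> Type;
  idm : forall a, hom a a;
  comp : forall x y z, hom y z -> hom x y -> hom x z;
  comp_assoc : forall a b c d (h : hom c d) (g : hom b c) (f : hom a b),
      comp h (comp g f) = comp (comp h g) f;
  comp_id_l : forall a b (f : hom a b), comp (idm b) f = f;
  comp_id_r : forall a b (f : hom a b), comp f (idm a) = f
}.
Arguments hom {c0} _ _ : rename.
Arguments idm {c0} _ : rename.
Arguments comp {c0 x y z} _ _ : rename.

Record Functor (C D : Category) := {
  Fob :> C -> D;
  Fmor : forall a b, hom a b -> hom (Fob a) (Fob b);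
  Fmor_id : forall a, Fmor a a (idm a) = idm (Fob a);
  Fmor_comp : forall a b c (g : hom b c) (f : hom a b),
      Fmor a c (comp g f) = comp (Fmor b c g) (Fmor a b f)
}.
Arguments Fmor {C D} f {a b} _ : rename.

Definition faithful {C D} (F : Functor C D) : Prop :=
  forall a b (f g : hom a b), Fmor F f = Fmor F g -> f = g.

Definition full {C D} (F : Functor C D) : Prop :=
  forall a b (h : hom (F a) (F b)), exists f : hom a b, Fmor F f = h.

Definition fully_faithful {C D} (F : Functor C D) : Prop := full F /\ faithful F.

Record Concrete (B : Category) := {
  cE :> Category;
  forget : Functor cE B;
  forget_faithful : faithful forget
}.
Arguments cE {B} _.
Arguments forget {B} _.

Definition Ebar {B} (E : Concrete B) (X Y : cE E) : hom (forget E X) (forget E Y) -> Prop :=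
  fun f => exists f' : hom X Y, Fmor (forget E) f' = f.

Definition swarrow {B : Category} {S T U : B}
    (h : hom S U -> Prop) (f : hom S T -> Prop) : hom T U -> Prop :=
  fun g => forall f0, f f0 -> h (comp g f0).

Definition hcast {C : Category} {a a' b b' : C} (ea : a = a') (eb : b = b')
    (f : hom a b) : hom a' b' :=
  match ea in _ = x, eb in _ = y return hom x y with eq_refl, eq_refl => f end.

Definition tensored {B} (E : Concrete B) : Prop :=
  forall (X : cE E) (T : B) (u : hom (forget E X) T -> Prop),
    exists (Y : cE E) (e : forget E Y = T),
      forall (Z : cE E) (g : hom T (forget E Z)),
        Ebar E Y Z (hcast (eq_sym e) eq_refl g) <-> swarrow (Ebar E X Z) u g.

(* An object over T that is tensored with the empty set of maps has the
   property that every map out of its carrier is an E-morphism: it is discrete.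
   Choosing such a discrete object L T over every T, a map f : T -> T' lifts to
   the unique E-morphism L T -> L T' over f, and the same lifting property
   gives the universal property of the identity unit T -> |L T|. *)
From Stdlib Require Import ClassicalEpsilon.

Lemma hcast_symK {C : Category} {a a' b b' : C} (ea : a = a') (eb : b = b')
  (f : hom a' b') : hcast ea eb (hcast (eq_sym ea) (eq_sym eb) f) = f.
Proof. destruct ea, eb. reflexivity. Qed.

Lemma hcast_Ksym {C : Category} {a a' b b' : C} (ea : a = a') (eb : b = b')
  (f : hom a b) : hcast (eq_sym ea) (eq_sym eb) (hcast ea eb f) = f.
Proof. destruct ea, eb. reflexivity. Qed.

Lemma hcast_idm {C : Category} {a a' : C} (ea : a = a') :
  hcast ea ea (idm a) = idm a'.
Proof. destruct ea. reflexivity. Qed.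

Lemma hcast_comp {C : Category} {a a' b b' c c' : C}
  (ea : a = a') (eb : b = b') (ec : c = c') (g : hom b c) (f : hom a b) :
  hcast ea ec (comp g f) = comp (hcast eb ec g) (hcast ea eb f).
Proof. destruct ea, eb, ec. reflexivity. Qed.

Section Discrete.

Context {B : Category} {E : Concrete B}.

Definition discrete (Y : cE E) : Prop :=
  forall (Z : cE E) (g : hom (forget E Y) (forget E Z)), Ebar E Y Z g.

Lemma tensored_discrete (X : cE E) (T : B) :
  tensored E -> exists (Y : cE E) (e : forget E Y = T), discrete Y.
Proof.
  intros Htens.
  destruct (Htens X T (fun _ => False)) as (Y & e & HY).
  exists Y, e. intros Z g.
  rewrite <- (hcast_Ksym e (eq_refl (forget E Z)) g).
  apply HY. intros f0 [].
Qed.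

Lemma discrete_family (X : cE E) : tensored E ->
  {D : B -> cE E & {e : forall T, forget E (D T) = T | forall T, discrete (D T)}}.
Proof.
  intros Htens.
  assert (HD : forall T, {Y : cE E & {e : forget E Y = T | discrete Y}}).
  { intro T.
    destruct (constructive_indefinite_description _ (tensored_discrete X T Htens))
      as [Y HY].
    exists Y. exact (constructive_indefinite_description _ HY). }
  exists (fun T => projT1 (HD T)), (fun T => proj1_sig (projT2 (HD T))).
  intro T. exact (proj2_sig (projT2 (HD T))).
Qed.

Definition lift {Y Z : cE E} (HY : discrete Y)
    (g : hom (forget E Y) (forget E Z)) : hom Y Z :=
  proj1_sig (constructive_indefinite_description _ (HY Z g)).

Lemma forget_lift {Y Z : cE E} (HY : discrete Y)
    (g : hom (forget E Y) (forget E Z)) :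
  Fmor (forget E) (lift HY g) = g.
Proof. exact (proj2_sig (constructive_indefinite_description _ (HY Z g))). Qed.

Lemma lift_unique {Y Z : cE E} (HY : discrete Y)
    (g : hom (forget E Y) (forget E Z)) (h : hom Y Z) :
  Fmor (forget E) h = g -> h = lift HY g.
Proof.
  intros Hh. apply (forget_faithful E). rewrite forget_lift. exact Hh.
Qed.

Context {D : B -> cE E} (e : forall T, forget E (D T) = T).
Hypothesis D_discrete : forall T, discrete (D T).

Definition discrete_mor {T T' : B} (f : hom T T') : hom (D T) (D T') :=
  lift (D_discrete T) (hcast (eq_sym (e T)) (eq_sym (e T')) f).

Lemma forget_discrete_mor {T T' : B} (f : hom T T') :
  Fmor (forget E) (discrete_mor f) = hcast (eq_sym (e T)) (eq_sym (e T')) f.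
Proof. apply forget_lift. Qed.

Lemma discrete_mor_idm (T : B) : discrete_mor (idm T) = idm (D T).
Proof.
  symmetry. apply lift_unique. rewrite Fmor_id. symmetry. apply hcast_idm.
Qed.

Lemma discrete_mor_comp (T T' T'' : B) (g : hom T' T'') (f : hom T T') :
  discrete_mor (comp g f) = comp (discrete_mor g) (discrete_mor f).
Proof.
  symmetry. apply lift_unique.
  rewrite Fmor_comp, !forget_discrete_mor.
  symmetry. apply hcast_comp.
Qed.

Definition discrete_functor : Functor B (cE E) :=
  Build_Functor B (cE E) D (@discrete_mor) discrete_mor_idm discrete_mor_comp.

Lemma forget_discrete_functor (T T' : B) (f : hom T T') :
  hcast (e T) (e T') (Fmor (forget E) (Fmor discrete_functor f)) = f.
Proof. simpl. rewrite forget_discrete_mor. apply hcast_symK. Qed.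

Lemma discrete_functor_universal (T : B) (Y : cE E) (f : hom T (forget E Y)) :
  exists! g : hom (discrete_functor T) Y,
    hcast (e T) eq_refl (Fmor (forget E) g) = f.
Proof.
  exists (lift (D_discrete T) (hcast (eq_sym (e T)) eq_refl f)). split.
  - rewrite forget_lift. exact (hcast_symK (e T) eq_refl f).
  - intros g Hg. symmetry. apply lift_unique. rewrite <- Hg.
    symmetry. exact (hcast_Ksym (e T) eq_refl _).
Qed.

Lemma discrete_functor_fully_faithful : fully_faithful discrete_functor.
Proof.
  split.
  - intros T T' h. exists (hcast (e T) (e T') (Fmor (forget E) h)).
    symmetry. apply lift_unique. symmetry. apply hcast_Ksym.
  - intros T T' f g Hfg.
    rewrite <- (forget_discrete_functor _ _ f), <- (forget_discrete_functor _ _ g), Hfg.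
    reflexivity.
Qed.

End Discrete.

Theorem corollary4p4 (B : Category) (E : Concrete B)
    (Hne : inhabited (ob (cE E))) (Htens : tensored E) :
  exists (L : Functor B (cE E)) (e : forall T : B, forget E (L T) = T),
    (* |-| ∘ L = Id_B on morphisms (L is a right inverse of |-|) *)
    (forall (T T' : B) (f : hom T T'),
        hcast (e T) (e T') (Fmor (forget E) (Fmor L f)) = f) /\
    (* L ⊣ |-| with identity unit: universal property of id_T : T -> |L T| *)
    (forall (T : B) (Y : cE E) (f : hom T (forget E Y)),
        exists! g : hom (L T) Y, hcast (e T) eq_refl (Fmor (forget E) g) = f) /\
    fully_faithful L.
Proof.
  destruct Hne as [X].
  destruct (discrete_family X Htens) as (D & e & HD).
  exists (discrete_functor e HD), e. split; [|split].
  - apply forget_discrete_functor.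
  - apply discrete_functor_universal.
  - apply discrete_functor_fully_faithful.
Qed.
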